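(* Let $n\ge2$. Every sublinear generalized frame function $f:\mathbb{C}^n\to\mathbb{R}$ is identically zero.
   Context: $\mathbb{C}^n$ carries a Hermitian inner product. A generalized frame function is $f:\mathbb{C}^n\to\mathbb{R}$ with $f(0)=0$ and $f(u+v)=f(u)+f(v)$ for every pair of orthogonal vectors $u,v\in\mathbb{C}^n\setminus\{0\}$. $f$ is sublinear if $f(v)/\|v\|\to0$ as $\|v\|\to\infty$. *)

From Stdlib Require Import Reals Lra.
Open Scope R_scope.

(* Complex numbers as pairs (real part, imaginary part). *)
Definition C := (R * R)%type.
Definition C0 : C := (0, 0).
Definition Cadd (a b : C) : C := (fst a + fst b, snd a + snd b).

(* C^n: sequences of complex numbers vanishing from index n on
   (coordinates 0 .. n-1). *)
Definition Cvec (n : nat) : Type :=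
  { v : nat -> C | forall i, (n <= i)%nat -> v i = C0 }.

Definition coord {n : nat} (v : Cvec n) (i : nat) : C := proj1_sig v i.

Lemma zero_vec_prop (n : nat) : forall i, (n <= i)%nat -> (fun _ : nat => C0) i = C0.
Proof. reflexivity. Qed.

Definition vzero (n : nat) : Cvec n := exist _ (fun _ => C0) (zero_vec_prop n).

Lemma vadd_prop (n : nat) (u v : Cvec n) :
  forall i, (n <= i)%nat -> Cadd (coord u i) (coord v i) = C0.
Proof.
  intros i Hi. unfold coord. destruct u as [u Hu], v as [v Hv]; simpl.
  rewrite (Hu i Hi), (Hv i Hi). unfold Cadd, C0; simpl. f_equal; ring.
Qed.

Definition vadd {n : nat} (u v : Cvec n) : Cvec n :=
  exist _ (fun i => Cadd (coord u i) (coord v i)) (vadd_prop n u v).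

Fixpoint rsum (k : nat) (g : nat -> R) : R :=
  match k with
  | O => 0
  | S k' => rsum k' g + g k'
  end.

(* Hermitian inner product <u,v> = sum_i u_i * conj(v_i), split into real and
   imaginary parts. *)
Definition inner_re {n : nat} (u v : Cvec n) : R :=
  rsum n (fun i => fst (coord u i) * fst (coord v i) + snd (coord u i) * snd (coord v i)).
Definition inner_im {n : nat} (u v : Cvec n) : R :=
  rsum n (fun i => snd (coord u i) * fst (coord v i) - fst (coord u i) * snd (coord v i)).

Definition orthogonal {n : nat} (u v : Cvec n) : Prop :=
  inner_re u v = 0 /\ inner_im u v = 0.

Definition vnorm {n : nat} (v : Cvec n) : R := sqrt (inner_re v v).

Definition gen_frame_function {n : nat} (f : Cvec n -> R) : Prop :=
  f (vzero n) = 0 /\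
  forall u v : Cvec n, u <> vzero n -> v <> vzero n -> orthogonal u v ->
    f (vadd u v) = f u + f v.

Definition sublinear {n : nat} (f : Cvec n -> R) : Prop :=
  forall eps : R, eps > 0 -> exists M : R, forall v : Cvec n,
    vnorm v > M -> Rabs (f v / vnorm v) < eps.

(* Take u <> 0 and a vector v orthogonal to u of the same norm (this needs n >= 2).
   Then u + v and u - v are orthogonal with sum 2u, so
   f(2u) = 2 f(u) + f(v) + f(-v).  Comparing this identity with the one for -u, -v
   shows that t |-> f(tu) - f(-tu) doubles when t doubles; being sublinear, it
   vanishes, so f is even.  Halving u and v then gives f(u) = f(v), hence
   f(2u) = 4 f(u): f grows quadratically along the ray through u, which
   sublinearity again forbids unless f(u) = 0. *)

From Pilot Require Import Defs.
From Stdlib Require Import Reals Lra Lia FunctionalExtensionality ProofIrrelevance Classical.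
Open Scope R_scope.

Definition Rsublinear (g : R -> R) : Prop :=
  forall eps, 0 < eps -> exists T, forall t, T < t -> Rabs (g t) < eps * t.

Lemma Rsublinear_sub (g h : R -> R) :
  Rsublinear g -> Rsublinear h -> Rsublinear (fun t => g t - h t).
Proof.
  intros Hg Hh eps Heps.
  destruct (Hg (eps / 2)) as [Tg HTg]; [lra|].
  destruct (Hh (eps / 2)) as [Th HTh]; [lra|].
  exists (Rmax Tg Th); intros t Ht.
  specialize (HTg t (Rle_lt_trans _ _ _ (Rmax_l Tg Th) Ht)).
  specialize (HTh t (Rle_lt_trans _ _ _ (Rmax_r Tg Th) Ht)).
  unfold Rminus; eapply Rle_lt_trans; [apply Rabs_triang|].
  rewrite Rabs_Ropp; lra.
Qed.

(* Along t = 2^k the hypotheses give |g(2^k)| = c^k |g 1| >= 2^k |g 1|. *)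
Lemma Rsublinear_doubling_eq0 (g : R -> R) (c : R) :
  2 <= c -> (forall t, 0 < t -> g (2 * t) = c * g t) -> Rsublinear g -> g 1 = 0.
Proof.
  intros Hc Hdouble Hg.
  assert (Hpow : forall k, g (2 ^ k) = c ^ k * g 1).
  { induction k as [|k IH]; simpl; [ring|].
    rewrite Hdouble, IH by (apply pow_lt; lra); ring. }
  apply NNPP; intros Hg1.
  assert (Habs : 0 < Rabs (g 1)) by (apply Rabs_pos_lt; exact Hg1).
  destruct (Hg (Rabs (g 1) / 2)) as [T HT]; [lra|].
  destruct (Pow_x_infinity 2 ltac:(rewrite Rabs_pos_eq; lra) (T + 1)) as [k Hk].
  specialize (Hk k (le_n k)); rewrite Rabs_pos_eq in Hk by (apply pow_le; lra).
  specialize (HT (2 ^ k) ltac:(lra)).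
  rewrite Hpow, Rabs_mult, (Rabs_pos_eq (c ^ k)) in HT by (apply pow_le; lra).
  assert (H2c : 2 ^ k <= c ^ k) by (apply pow_incr; lra).
  assert (0 < 2 ^ k) by (apply pow_lt; lra).
  nra.
Qed.

Lemma rsum_ext k g h : (forall i, (i < k)%nat -> g i = h i) -> rsum k g = rsum k h.
Proof. induction k; simpl; intros H; auto. rewrite IHk, H; auto. Qed.

Lemma rsum_add k g h : rsum k (fun i => g i + h i) = rsum k g + rsum k h.
Proof. induction k; simpl; [ring|]. rewrite IHk; ring. Qed.

Lemma rsum_scal k c g : rsum k (fun i => c * g i) = c * rsum k g.
Proof. induction k; simpl; [ring|]. rewrite IHk; ring. Qed.

Lemma rsum_nonneg k g : (forall i, 0 <= g i) -> 0 <= rsum k g.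
Proof. induction k; simpl; intros H; [lra|]. specialize (IHk H); specialize (H k); lra. Qed.

Lemma rsum_nonneg_eq0 k g : (forall i, 0 <= g i) -> rsum k g = 0 ->
  forall i, (i < k)%nat -> g i = 0.
Proof.
  induction k; simpl; intros H E i Hi; [lia|].
  pose proof (rsum_nonneg k g H); pose proof (H k).
  destruct (Nat.eq_dec i k); [subst; lra|].
  apply IHk; auto; [lra|lia].
Qed.

Lemma rsum_first2 n g : (2 <= n)%nat -> (forall i, (2 <= i)%nat -> g i = 0) ->
  rsum n g = g 0%nat + g 1%nat.
Proof.
  intros Hn H; induction n; [lia|].
  destruct (Nat.eq_dec n 1); [subst; simpl; ring|].
  simpl; rewrite IHn, (H n) by lia; ring.
Qed.

Lemma vec_eq {n} (u v : Cvec n) : (forall i, coord u i = coord v i) -> u = v.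
Proof.
  destruct u as [u Hu], v as [v Hv]; unfold coord; simpl; intros H.
  assert (u = v) by (apply functional_extensionality; auto); subst.
  f_equal; apply proof_irrelevance.
Qed.

Lemma C_eq (a b : Defs.C) : fst a = fst b -> snd a = snd b -> a = b.
Proof. destruct a, b; simpl; intros; subst; auto. Qed.

Lemma vscale_prop n t (u : Cvec n) : forall i, (n <= i)%nat ->
  (t * fst (coord u i), t * snd (coord u i)) = C0.
Proof.
  intros i Hi; destruct u as [u Hu]; unfold coord; simpl; rewrite (Hu i Hi).
  apply C_eq; simpl; ring.
Qed.

Definition vscale {n} (t : R) (u : Cvec n) : Cvec n :=
  exist _ (fun i => (t * fst (coord u i), t * snd (coord u i))) (vscale_prop n t u).

Lemma vscaleA {n} a b (u : Cvec n) : vscale a (vscale b u) = vscale (a * b) u.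
Proof. apply vec_eq; intros; apply C_eq; simpl; ring. Qed.

Lemma vscale1 {n} (u : Cvec n) : vscale 1 u = u.
Proof. apply vec_eq; intros; apply C_eq; simpl; ring. Qed.

Lemma vscale_vzero {n} t : vscale t (vzero n) = vzero n.
Proof. apply vec_eq; intros; apply C_eq; simpl; ring. Qed.

Lemma vscaleC {n} a b (u : Cvec n) : vscale a (vscale b u) = vscale b (vscale a u).
Proof. rewrite !vscaleA, Rmult_comm; reflexivity. Qed.

Notation sqnorm u := (inner_re u u).

Ltac inner_lin := unfold inner_re, inner_im;
  repeat (rewrite <- rsum_add || rewrite <- rsum_scal); apply rsum_ext; intros; simpl; ring.

Lemma inner_re_addl {n} (u v w : Cvec n) : inner_re (vadd u v) w = inner_re u w + inner_re v w.
Proof. inner_lin. Qed.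
Lemma inner_re_addr {n} (u v w : Cvec n) : inner_re w (vadd u v) = inner_re w u + inner_re w v.
Proof. inner_lin. Qed.
Lemma inner_im_addl {n} (u v w : Cvec n) : inner_im (vadd u v) w = inner_im u w + inner_im v w.
Proof. inner_lin. Qed.
Lemma inner_im_addr {n} (u v w : Cvec n) : inner_im w (vadd u v) = inner_im w u + inner_im w v.
Proof. inner_lin. Qed.
Lemma inner_re_scalel {n} t (u w : Cvec n) : inner_re (vscale t u) w = t * inner_re u w.
Proof. inner_lin. Qed.
Lemma inner_re_scaler {n} t (u w : Cvec n) : inner_re w (vscale t u) = t * inner_re w u.
Proof. inner_lin. Qed.
Lemma inner_im_scalel {n} t (u w : Cvec n) : inner_im (vscale t u) w = t * inner_im u w.
Proof. inner_lin. Qed.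
Lemma inner_im_scaler {n} t (u w : Cvec n) : inner_im w (vscale t u) = t * inner_im w u.
Proof. inner_lin. Qed.
Lemma inner_re_sym {n} (u v : Cvec n) : inner_re v u = inner_re u v.
Proof. inner_lin. Qed.
Lemma inner_im_antisym {n} (u v : Cvec n) : inner_im v u = - inner_im u v.
Proof.
  replace (- inner_im u v) with (-1 * inner_im u v) by ring. inner_lin.
Qed.

Lemma inner_im_self {n} (u : Cvec n) : inner_im u u = 0.
Proof. pose proof (inner_im_antisym u u); lra. Qed.

Lemma orthogonal_sym {n} (u v : Cvec n) : orthogonal u v -> orthogonal v u.
Proof.
  intros [Hre Him]; split; [rewrite inner_re_sym | rewrite inner_im_antisym]; lra.
Qed.

Lemma sqnorm_ge0 {n} (u : Cvec n) : 0 <= sqnorm u.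
Proof. apply rsum_nonneg; intros; nra. Qed.

Lemma sqnorm_vzero n : sqnorm (vzero n) = 0.
Proof. unfold inner_re, coord; simpl; induction n as [|k IH]; simpl; [|rewrite IH]; ring. Qed.

Lemma sqnorm_eq0 {n} (u : Cvec n) : sqnorm u = 0 -> u = vzero n.
Proof.
  intros H; apply vec_eq; intros i; unfold coord at 2; simpl.
  destruct (Compare_dec.le_lt_dec n i) as [Hi|Hi].
  - destruct u as [u Hu]; unfold coord; simpl; auto.
  - assert (Hnn : forall j, 0 <= fst (coord u j) * fst (coord u j) + snd (coord u j) * snd (coord u j))
      by (intros; nra).
    pose proof (rsum_nonneg_eq0 n _ Hnn H i Hi).
    apply C_eq; simpl; nra.
Qed.

Lemma sqnorm_gt0 {n} (u : Cvec n) : u <> vzero n -> 0 < sqnorm u.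
Proof.
  intros Hu; destruct (sqnorm_ge0 u) as [|E]; auto.
  exfalso; apply Hu, sqnorm_eq0; auto.
Qed.

Lemma sqnorm_gt0_neq_vzero {n} (u : Cvec n) : 0 < sqnorm u -> u <> vzero n.
Proof. intros H E; subst; rewrite sqnorm_vzero in H; lra. Qed.

Lemma vnorm_scale {n} t (u : Cvec n) : vnorm (vscale t u) = Rabs t * vnorm u.
Proof.
  unfold vnorm; rewrite inner_re_scalel, inner_re_scaler, <- Rmult_assoc.
  rewrite sqrt_mult, <- sqrt_Rsqr_abs by (try apply sqnorm_ge0; nra); reflexivity.
Qed.

Definition eq_orthopair {n} (u v : Cvec n) : Prop :=
  0 < sqnorm u /\ sqnorm v = sqnorm u /\ orthogonal u v.

Lemma eq_orthopair_sym {n} (u v : Cvec n) : eq_orthopair u v -> eq_orthopair v u.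
Proof. intros (Hu & Hv & Ho); repeat split; try lra; apply orthogonal_sym; auto. Qed.

Lemma eq_orthopair_scale {n} (u v : Cvec n) t :
  t <> 0 -> eq_orthopair u v -> eq_orthopair (vscale t u) (vscale t v).
Proof.
  intros Ht (Hu & Hv & [Hre Him]); unfold eq_orthopair, orthogonal.
  rewrite !inner_re_scalel, !inner_re_scaler, !inner_im_scalel, !inner_im_scaler, Hv, Hre, Him.
  repeat split; try ring.
  assert (0 < t * t) by nra; nra.
Qed.

(* For u = (u0, u1, ...) the vector (-conj u1, conj u0, 0, ...) is orthogonal to u,
   and nonzero unless u0 = u1 = 0, in which case e0 will do. *)
Definition perp_coords {n} (u : Cvec n) (i : nat) : Defs.C :=
  match i with
  | O => (- fst (coord u 1), snd (coord u 1))
  | S O => (fst (coord u 0), - snd (coord u 0))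
  | _ => C0
  end.

Lemma perp_coords_prop n (Hn : (2 <= n)%nat) (u : Cvec n) :
  forall i, (n <= i)%nat -> perp_coords u i = C0.
Proof. intros [|[|i]] Hi; simpl; auto; lia. Qed.

Definition e0_coords (i : nat) : Defs.C := match i with O => (1, 0) | _ => C0 end.

Lemma e0_coords_prop n (Hn : (2 <= n)%nat) : forall i, (n <= i)%nat -> e0_coords i = C0.
Proof. intros [|i] Hi; simpl; auto; lia. Qed.

Lemma orthogonal_nonzero_exists n (Hn : (2 <= n)%nat) (u : Cvec n) :
  exists w, 0 < sqnorm w /\ orthogonal u w.
Proof.
  set (a0 := fst (coord u 0)); set (b0 := snd (coord u 0)).
  set (a1 := fst (coord u 1)); set (b1 := snd (coord u 1)).
  destruct (Req_dec (a0 * a0 + b0 * b0 + a1 * a1 + b1 * b1) 0) as [Z|Z].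
  - assert (a0 = 0 /\ b0 = 0) as [A B] by nra.
    exists (exist _ e0_coords (e0_coords_prop n Hn)).
    unfold orthogonal, inner_re, inner_im.
    rewrite !(rsum_first2 n) by (auto; intros [|[|i]] Hi; try lia; unfold coord; simpl; ring).
    unfold coord at 2 4 6 8; simpl; fold a0 b0; rewrite A, B.
    repeat split; lra.
  - exists (exist _ (perp_coords u) (perp_coords_prop n Hn u)).
    unfold orthogonal, inner_re, inner_im.
    rewrite !(rsum_first2 n) by (auto; intros [|[|i]] Hi; try lia; unfold coord; simpl; ring).
    unfold coord at 2 4 6 8; simpl; fold a0 b0 a1 b1.
    repeat split; try ring; nra.
Qed.

Lemma eq_orthopair_exists n (Hn : (2 <= n)%nat) (u : Cvec n) :
  0 < sqnorm u -> exists v, eq_orthopair u v.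
Proof.
  intros Hu; destruct (orthogonal_nonzero_exists n Hn u) as (w & Hw & [Hre Him]).
  set (c := sqrt (sqnorm u / sqnorm w)).
  assert (Hc : c * c = sqnorm u / sqnorm w)
    by (apply sqrt_sqrt, Rlt_le, Rdiv_lt_0_compat; lra).
  exists (vscale c w); unfold eq_orthopair, orthogonal.
  rewrite inner_re_scalel, !inner_re_scaler, inner_im_scaler, Hre, Him, <- Rmult_assoc, Hc.
  repeat split; try lra; field; lra.
Qed.

Section FrameFunction.

Variables (n : nat) (f : Cvec n -> R).
Hypothesis frame_f : gen_frame_function f.

Lemma frame_double (u v : Cvec n) :
  eq_orthopair u v -> f (vscale 2 u) = 2 * f u + f v + f (vscale (-1) v).
Proof.
  destruct frame_f as [_ Hadd]; intros (Hu & Hv & [Hre Him]).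
  set (w := vscale (-1) v).
  assert (Hw : sqnorm w = sqnorm v) by (unfold w; rewrite inner_re_scalel, inner_re_scaler; ring).
  assert (Huw : orthogonal u w)
    by (unfold w; split; rewrite ?inner_re_scaler, ?inner_im_scaler; [rewrite Hre | rewrite Him]; ring).
  assert (Hsum : orthogonal (vadd u v) (vadd u w)).
  { unfold w; split.
    - rewrite !inner_re_addl, !inner_re_addr, !inner_re_scaler, Hre, (inner_re_sym u v), Hre; lra.
    - rewrite !inner_im_addl, !inner_im_addr, !inner_im_scaler, Him,
        (inner_im_antisym u v), Him, !inner_im_self; ring. }
  assert (Huv : 0 < sqnorm (vadd u v))
    by (rewrite inner_re_addl, !inner_re_addr, (inner_re_sym u v); lra).
  assert (Huw' : 0 < sqnorm (vadd u w))
    by (destruct Huw as [Hre' _]; rewrite inner_re_addl, !inner_re_addr, (inner_re_sym u w); lra).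
  replace (vscale 2 u) with (vadd (vadd u v) (vadd u w))
    by (apply vec_eq; intros; apply C_eq; simpl; ring).
  rewrite Hadd, !Hadd; try (apply sqnorm_gt0_neq_vzero; lra); try assumption.
  - ring.
  - split; assumption.
Qed.

Lemma frame_double_ray (u v : Cvec n) t : t <> 0 -> eq_orthopair u v ->
  f (vscale (2 * t) u) = 2 * f (vscale t u) + f (vscale t v) + f (vscale t (vscale (-1) v)).
Proof.
  intros Ht Huv; rewrite <- vscaleA, (vscaleC t (-1)).
  apply frame_double, eq_orthopair_scale; auto.
Qed.

Hypothesis sublinear_f : sublinear f.

Lemma sublinear_ray (u : Cvec n) : 0 < sqnorm u -> Rsublinear (fun t => f (vscale t u)).
Proof.
  intros Hu eps Heps.
  assert (Hnu : 0 < vnorm u) by (apply sqrt_lt_R0; auto).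
  destruct (sublinear_f (eps / vnorm u)) as [M HM]; [apply Rlt_gt, Rdiv_lt_0_compat; lra|].
  exists (Rmax 0 (M / vnorm u)); intros t Ht.
  assert (Ht0 : 0 < t) by (eapply Rle_lt_trans; [apply Rmax_l | exact Ht]).
  assert (HtM : M < t * vnorm u).
  { pose proof (Rle_lt_trans _ _ _ (Rmax_r 0 (M / vnorm u)) Ht).
    apply (Rmult_lt_reg_r (/ vnorm u)); [apply Rinv_0_lt_compat; lra|].
    rewrite Rmult_assoc, Rinv_r, Rmult_1_r by lra; exact H. }
  assert (Hnorm : vnorm (vscale t u) = t * vnorm u) by (rewrite vnorm_scale, Rabs_pos_eq; lra).
  specialize (HM (vscale t u) ltac:(lra)); rewrite Hnorm in HM.
  replace (f (vscale t u)) with (f (vscale t u) / (t * vnorm u) * (t * vnorm u)) by (field; lra).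
  rewrite Rabs_mult, (Rabs_pos_eq (t * vnorm u)) by nra.
  replace (eps * t) with (eps / vnorm u * (t * vnorm u)) by (field; lra).
  apply Rmult_lt_compat_r; [nra | exact HM].
Qed.

Hypothesis dim_f : (2 <= n)%nat.

Lemma frame_even (u : Cvec n) : f (vscale (-1) u) = f u.
Proof.
  destruct (classic (u = vzero n)) as [->|Hu0]; [rewrite vscale_vzero; reflexivity|].
  pose proof (sqnorm_gt0 u Hu0) as Hu.
  destruct (eq_orthopair_exists n dim_f u Hu) as [v Huv].
  assert (Hmu : 0 < sqnorm (vscale (-1) u))
    by (rewrite inner_re_scalel, inner_re_scaler; lra).
  set (h := fun t => f (vscale t u) - f (vscale t (vscale (-1) u))).
  assert (Hh : h 1 = 0).
  { apply (Rsublinear_doubling_eq0 h 2); [lra| |apply Rsublinear_sub; apply sublinear_ray; auto].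
    intros t Ht; unfold h.
    rewrite (frame_double_ray u v t), (frame_double_ray (vscale (-1) u) (vscale (-1) v) t)
      by (try apply eq_orthopair_scale; auto; lra).
    replace (vscale (-1) (vscale (-1) v)) with v
      by (rewrite vscaleA, <- (vscale1 v) at 1; f_equal; ring).
    ring. }
  unfold h in Hh; cbv beta in Hh; rewrite !vscale1 in Hh; lra.
Qed.

Lemma frame_double_quad (u : Cvec n) : f (vscale 2 u) = 4 * f u.
Proof.
  destruct (classic (u = vzero n)) as [->|Hu0].
  { rewrite vscale_vzero; destruct frame_f as [-> _]; ring. }
  destruct (eq_orthopair_exists n dim_f u (sqnorm_gt0 u Hu0)) as [v Huv].
  assert (Hhalf : forall a b, eq_orthopair a b -> f a = 2 * f (vscale (/ 2) a) + 2 * f (vscale (/ 2) b)).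
  { intros a b Hab.
    pose proof (frame_double _ _ (eq_orthopair_scale a b (/ 2) ltac:(lra) Hab)) as E.
    rewrite frame_even, vscaleA in E; replace (2 * / 2) with 1 in E by field.
    rewrite vscale1 in E; lra. }
  pose proof (Hhalf u v Huv); pose proof (Hhalf v u (eq_orthopair_sym u v Huv)).
  rewrite (frame_double u v Huv), frame_even; lra.
Qed.

End FrameFunction.

Theorem mainTheorem20 (n : nat) (Hn : (2 <= n)%nat) (f : Cvec n -> R) :
  gen_frame_function f -> sublinear f -> forall v : Cvec n, f v = 0.
Proof.
  intros Hf Hs u.
  destruct (classic (u = vzero n)) as [->|Hu0]; [apply Hf|].
  rewrite <- (vscale1 u).
  apply (Rsublinear_doubling_eq0 (fun t => f (vscale t u)) 4); [lra| |].
  - intros t _; simpl; rewrite <- vscaleA; apply frame_double_quad; auto.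
  - apply sublinear_ray; auto; apply sqnorm_gt0; auto.
Qed.
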